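(* For each $n\in\mathbb N$ we have $\log p^{(j)}_n\sim j\log j$ as $j\to+\infty$.
   Context: Let $p_n$ denote the $n$-th prime number. Define $p^{(0)}_n=n$ and recursively $p^{(k+1)}_n=p_{p^{(k)}_n}$ for $k\in\mathbb N_0$. $\log$ is the natural logarithm and $a_j\sim b_j$ means $a_j/b_j\to1$. *)

From mathcomp Require Import all_boot.
From Stdlib Require Import Reals.

(* p_n = the n-th prime, 1-indexed: p_1 = 2, p_2 = 3, ...
   (nth_prime 0 is an irrelevant junk value; only n >= 1 is used). *)

Lemma exists_prime_above (m : nat) : exists p, (m < p) && prime p.
Proof. by case: (prime_above m) => p Hp Pp; exists p; rewrite Hp Pp. Qed.

Definition next_prime (m : nat) : nat := ex_minn (exists_prime_above m).

Fixpoint prime0 (k : nat) : nat :=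
  match k with
  | 0 => 2
  | k'.+1 => next_prime (prime0 k')
  end.

Definition nth_prime (n : nat) : nat := prime0 n.-1.

Definition iter_prime (k n : nat) : nat := iter k nth_prime n.

(* Chebyshev's elementary estimates -- 2^k <= C(2k, k) <= (2k)^pi(2k), and the
   product of the primes up to x is at most 8^x -- give
   c m log m <= p_m <= C m log m, that is log p_m = log m + log log m + O(1).
   Hence L_j := log p^(j)_n tends to infinity and satisfies
   L_(j+1) = L_j + log L_j + O(1). Such a sequence eventually grows at least
   linearly, hence log L_j >= log j - O(1) and L_j >= j log j - O(j); by
   induction also L_j <= j log j + j log log j + O(j), and dividing by
   j log j gives the limit 1. *)

From Stdlib Require Import Reals Lra.
From Coquelicot Require Import Coquelicot.
From mathcomp Require Import all_boot zify.

Set Implicit Arguments.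
Unset Strict Implicit.

Local Open Scope nat_scope.

(** * Counting primes *)

Lemma next_primeP m :
  [/\ m < next_prime m, prime (next_prime m)
    & forall q, m < q -> prime q -> next_prime m <= q].
Proof.
rewrite /next_prime; case: ex_minnP => p /andP[lt_mp pr_p] minp.
by split=> // q lt_mq pr_q; apply: minp; rewrite lt_mq pr_q.
Qed.

Definition primepi x := count prime (iota 0 x.+1).

Lemma primepiD m d : primepi (m + d) = primepi m + count prime (iota m.+1 d).
Proof. by rewrite /primepi -addSn iotaD count_cat. Qed.

Lemma primepiS m : primepi m.+1 = primepi m + prime m.+1.
Proof. by have := primepiD m 1; rewrite addn1 /= addn0. Qed.

Lemma leq_primepi m n : m <= n -> primepi m <= primepi n.
Proof. by move=> le_mn; rewrite -(subnKC le_mn) primepiD leq_addr. Qed.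

Lemma primepi_le m : primepi m <= m.
Proof.
by rewrite /primepi -add1n iotaD count_cat add0n -[X in _ <= X](size_iota 1) count_size.
Qed.

Lemma primepi_pred p : prime p -> primepi p.-1 = (primepi p).-1.
Proof.
move=> pr_p; rewrite -(prednK (prime_gt0 pr_p)) primepiS.
by rewrite prednK ?prime_gt0 // pr_p addn1.
Qed.

Lemma primepi_next_prime m : primepi (next_prime m) = (primepi m).+1.
Proof.
have [lt_mN pr_N minN] := next_primeP m.
have eN : next_prime m = m + (next_prime m - m.+1) + 1 by lia.
have no_prime : count prime (iota m.+1 (next_prime m - m.+1)) = 0.
  apply/eqP; rewrite -leqn0 leqNgt -has_count; apply/hasP => -[q].
  by rewrite mem_iota => /andP[lt_mq ltqN] /(minN q lt_mq); lia.
rewrite {1}eN -addnA primepiD iotaD count_cat no_prime.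
have -> : m.+1 + (next_prime m - m.+1) = next_prime m by lia.
by rewrite /= pr_N addn1.
Qed.

Lemma prime_nth_prime m : prime (nth_prime m).
Proof. by rewrite /nth_prime; case: m.-1 => [|k] //=; case: (next_primeP (prime0 k)). Qed.

Lemma primepi_nth_prime m : 0 < m -> primepi (nth_prime m) = m.
Proof.
case: m => // m _; rewrite /nth_prime /=.
by elim: m => [|m IH] //=; rewrite primepi_next_prime IH.
Qed.

Lemma nth_prime_gt m : m < nth_prime m.
Proof.
case: m => // m; rewrite /nth_prime /=.
elim: m => // m IH /=; have [lt_pN _ _] := next_primeP (prime0 m).
exact: leq_ltn_trans IH lt_pN.
Qed.

Lemma iter_prime_ge j n : j + n <= iter_prime j n.
Proof. by elim: j => // j IH; rewrite addSn; apply: leq_ltn_trans IH (nth_prime_gt _). Qed.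

(** * Chebyshev's bounds *)

Lemma bin_le_exp2 n k : 'C(n, k) <= 2 ^ n.
Proof.
elim: n k => [|n IH] [|k] //; first by rewrite bin0 expn_gt0.
by rewrite binS expnS mul2n -addnn leq_add.
Qed.

Lemma exp2_le_central_bin k : 2 ^ k <= 'C(k.*2, k).
Proof.
elim: k => // k IH.
have sym : 'C(k.*2.+1, k.+1) = 'C(k.*2.+1, k).
  by rewrite -(@bin_sub k.*2.+1 k); [congr binomial | ]; lia.
rewrite doubleS binS sym expnS mul2n -addnn.
by apply: leq_add; apply: leq_trans IH (leq_bin2l _ _).
Qed.

Lemma logn_fact_sum p n N : prime p -> n <= N ->
  logn p n`! = \sum_(1 <= i < N.+1) n %/ p ^ i.
Proof.
move=> pr_p le_nN; rewrite logn_fact // [RHS](@big_cat_nat _ _ _ n.+1) //=.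
rewrite [X in _ + X]big1_seq ?addn0 // => i /andP[_]; rewrite mem_index_iota.
move=> /andP[lt_ni _]; rewrite divn_small //.
exact: leq_trans lt_ni (ltnW (ltn_expl _ (prime_gt1 pr_p))).
Qed.

Lemma logn_central_bin p k : prime p ->
  logn p 'C(k.*2, k) = \sum_(1 <= i < k.*2.+1) (k.*2 %/ p ^ i - (k %/ p ^ i).*2).
Proof.
move=> pr_p; have le_k2k : k <= k.*2 by rewrite -addnn leq_addr.
have := congr1 (logn p) (bin_fact le_k2k).
rewrite (_ : k.*2 - k = k); last by lia.
rewrite !lognM ?muln_gt0 ?fact_gt0 ?bin_gt0 //.
rewrite (logn_fact_sum pr_p le_k2k) (logn_fact_sum pr_p (leqnn _)).
move=> sum_eq.
rewrite sumnB => [|i _]; last first.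
  by rewrite leq_divRL ?expn_gt0 ?prime_gt0 // -mul2n -mulnA mul2n leq_double leq_divM.
rewrite -sum_eq -big_split /=; under eq_bigr do rewrite addnn.
by rewrite addnK.
Qed.

Lemma double_div_sub_le1 k d : 0 < d -> k.*2 %/ d - (k %/ d).*2 <= 1.
Proof.
move=> d_gt0; rewrite leq_subLR -ltnS ltn_divLR //.
have := ltn_ceil k d_gt0; lia.
Qed.

Lemma logn_central_bin_le p k : prime p -> 0 < k ->
  logn p 'C(k.*2, k) <= trunc_log p k.*2.
Proof.
move=> pr_p k_gt0; have p_gt1 := prime_gt1 pr_p; set t := trunc_log p k.*2.
have pt_le : p ^ t <= k.*2 by apply: trunc_logP; lia.
have le_t2k : t <= k.*2 := leq_trans (ltnW (ltn_expl t p_gt1)) pt_le.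
rewrite logn_central_bin // (@big_cat_nat _ _ _ t.+1) //=.
rewrite [X in _ + X]big1_seq ?addn0 => [|i /andP[_]]; last first.
  rewrite mem_index_iota => /andP[lt_ti _]; rewrite divn_small ?div0n //.
  exact: leq_trans (trunc_log_ltn _ p_gt1) (leq_pexp2l (ltnW p_gt1) lt_ti).
have term_le1 i : k.*2 %/ p ^ i - (k %/ p ^ i).*2 <= 1.
  by apply: double_div_sub_le1; rewrite expn_gt0 prime_gt0.
apply: leq_trans (leq_sum _ (fun i _ => term_le1 i)) _.
by rewrite sum_nat_const_nat muln1 subn1.
Qed.

Lemma prime_dvd_fact p n : prime p -> (p %| n`!) = (p <= n).
Proof.
move=> pr_p; apply/idP/idP => [|le_pn]; last by rewrite dvdn_fact ?prime_gt0.
rewrite fact_prod Euclid_dvd_prod // big_has => /hasP[i].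
by rewrite mem_index_iota => /andP[i_gt0 lt_in] /dvdn_leq; lia.
Qed.

Lemma central_bin_le_exp_primepi k : 0 < k -> 'C(k.*2, k) <= k.*2 ^ primepi k.*2.
Proof.
move=> k_gt0; have C_gt0 : 0 < 'C(k.*2, k) by rewrite bin_gt0 -addnn leq_addr.
rewrite {1}(prod_prime_decomp C_gt0) prime_decompE big_map /=.
apply: (@leq_trans (\prod_(p <- primes 'C(k.*2, k)) k.*2)).
  rewrite big_seq [X in _ <= X]big_seq; apply: leq_prod => p.
  rewrite mem_primes => /and3P[pr_p _ _] /=.
  apply: leq_trans (leq_pexp2l (prime_gt0 pr_p) (logn_central_bin_le pr_p k_gt0)) _.
  by apply: trunc_logP; [exact: prime_gt1 | lia].
rewrite big_const_seq count_predT iter_muln_1 leq_pexp2l ?double_gt0 //.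
rewrite /primepi -size_filter; apply: uniq_leq_size; first exact: primes_uniq.
move=> p; rewrite mem_primes mem_filter mem_iota => /and3P[pr_p _ dvd_pC].
rewrite pr_p /= add0n ltnS -(prime_dvd_fact _ pr_p) -addnn -(bin_fact (leq_addr k k)).
by rewrite dvdn_mulr // addnn.
Qed.

Lemma exp2_le_exp_primepi k : 0 < k -> 2 ^ k <= k.*2 ^ primepi k.*2.
Proof.
by move=> k_gt0; apply: leq_trans (exp2_le_central_bin k) (central_bin_le_exp_primepi k_gt0).
Qed.

Lemma prod_primes_dvd (s : seq nat) N :
  uniq s -> all prime s -> {in s, forall p, p %| N} -> \prod_(p <- s) p %| N.
Proof.
elim: s => [|p s IH]; first by rewrite big_nil dvd1n.
rewrite cons_uniq /= => /andP[p_s uniq_s] /andP[pr_p pr_s] dvdN.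
have coprime_ps : coprime p (\prod_(q <- s) q).
  rewrite prime_coprime // Euclid_dvd_prod // big_has; apply/hasPn => q s_q.
  rewrite dvdn_prime2 ?(allP pr_s q s_q) //.
  by apply: contraNneq p_s => ->.
rewrite big_cons Gauss_dvd // dvdN ?mem_head // IH // => q s_q.
by apply: dvdN; rewrite inE s_q orbT.
Qed.

Definition primeprod a b := \prod_(a <= p < b | prime p) p.

Lemma primeprod_gt0 a b : 0 < primeprod a b.
Proof. exact/prodn_cond_gt0/prime_gt0. Qed.

Lemma primeprod_cat a b c : a <= b -> b <= c ->
  primeprod a c = primeprod a b * primeprod b c.
Proof. exact: big_cat_nat. Qed.

Lemma primeprodS a b : a <= b ->
  primeprod a b.+1 = primeprod a b * (if prime b then b else 1).
Proof. by move=> le_ab; rewrite /primeprod big_mkcond big_nat_recr //= -big_mkcond. Qed.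

Lemma primeprod_dvd a b N :
  (forall p, prime p -> a <= p < b -> p %| N) -> primeprod a b %| N.
Proof.
move=> dvdN; rewrite /primeprod -big_filter; apply: prod_primes_dvd.
- exact/filter_uniq/iota_uniq.
- by apply/allP => p; rewrite mem_filter => /andP[].
- by move=> p; rewrite mem_filter mem_index_iota => /andP[pr_p range_p]; apply: dvdN.
Qed.

Lemma prime_dvd_bin_mid p m : prime p -> m.+1 < p <= m.*2.+1 -> p %| 'C(m.*2.+1, m).
Proof.
move=> pr_p /andP[lt_mp le_p2m]; have le_m2m : m <= m.*2.+1 by lia.
have dvd_fact : p %| m.*2.+1`! by rewrite dvdn_fact ?prime_gt0.
rewrite -(bin_fact le_m2m) Gauss_dvdl // in dvd_fact.
by rewrite coprimeMr !prime_coprime // !prime_dvd_fact //; lia.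
Qed.

Lemma primeprod_mid_le_exp2 m : primeprod m.+2 m.*2.+2 <= 2 ^ m.*2.+1.
Proof.
apply: leq_trans (bin_le_exp2 _ m); apply: dvdn_leq; first by rewrite bin_gt0; lia.
by apply: primeprod_dvd => p pr_p range_p; apply: prime_dvd_bin_mid.
Qed.

(* With the crude bound C(2m+1, m) <= 2^(2m+1), the optimal constant 4 would not
   survive the induction step; 8 does. *)
Lemma primeprod_le_exp8 x : primeprod 0 x.+1 <= 8 ^ x.
Proof.
elim/ltn_ind: x => x IH.
have [le_x2|lt2x] := leqP x 2.
  by case: x le_x2 {IH} => [|[|[|]]] //; rewrite /primeprod unlock.
have [x_odd|x_even] := boolP (odd x).
  set m := x./2; have x_eq : x = m.*2.+1.
    by have := odd_double_half x; rewrite x_odd /= -/m; lia.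
  rewrite x_eq (@primeprod_cat 0 m.+2) //; last by lia.
  apply: leq_trans (leq_mul (IH m.+1 _) (primeprod_mid_le_exp2 m)) _; first by lia.
  by rewrite (_ : 8 = 2 ^ 3) // -!expnM -expnD leq_exp2l //; lia.
have x_npr : prime x = false.
  by apply/negP => /even_prime[]; [lia | apply/negP].
rewrite primeprodS // x_npr muln1 -(@prednK x) //; last by lia.
apply: leq_trans (IH x.-1 _) _; first by lia.
by rewrite leq_exp2l //; lia.
Qed.

Lemma exp_primepi_sub_le y x : y <= x -> y.+1 ^ (primepi x - primepi y) <= 8 ^ x.
Proof.
move=> le_yx.
have -> : primepi x - primepi y = count prime (iota y.+1 (x - y)).
  by rewrite -{1}(subnKC le_yx) primepiD addKn.
apply: (@leq_trans (primeprod y.+1 x.+1)).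
  rewrite -iter_muln_1 -big_const_seq /primeprod /index_iota subSS.
  rewrite big_seq_cond [X in _ <= X]big_seq_cond.
  by apply: leq_prod => p /andP[]; rewrite mem_iota; lia.
apply: leq_trans (primeprod_le_exp8 x).
by rewrite (@primeprod_cat 0 y.+1) // leq_pmull ?primeprod_gt0.
Qed.

Local Open Scope R_scope.

Lemma leq_INR m n : (m <= n)%nat -> INR m <= INR n.
Proof. by move/leP/le_INR. Qed.

Lemma INR_expn a b : INR (a ^ b)%nat = INR a ^ b.
Proof. by elim: b => [|b IH]; rewrite ?expn0 // expnS mult_INR IH. Qed.

Lemma ln_gt0 x : 1 < x -> 0 < ln x.
Proof. by move=> x_gt1; rewrite -ln_1; apply: ln_increasing; lra. Qed.

Lemma ln_ge0 x : 1 <= x -> 0 <= ln x.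
Proof. by move=> x_ge1; rewrite -ln_1; apply: ln_le; lra. Qed.

Lemma ln_le_sub1 x : 0 < x -> ln x <= x - 1.
Proof. by move=> x_gt0; have := exp_ineq1_le (ln x); rewrite exp_ln //; lra. Qed.

Lemma ln_le_half x : 0 < x -> ln x <= x / 2.
Proof.
move=> x_gt0; have half_gt0 : 0 < x / 2 by lra.
have := ln_le_sub1 half_gt0; have := @ln_le_sub1 2 ltac:(lra).
rewrite ln_div; lra.
Qed.

Lemma ln_ge1 x : 3 <= x -> 1 <= ln x.
Proof.
by move=> x_ge3; rewrite -(ln_exp 1); apply: ln_le; [exact: exp_pos | have := exp_le_3; lra].
Qed.

(* The primes in (m/2, p_m] number at least m/2, each exceeds m/2, and their
   product is at most 8^(p_m). *)
Lemma nth_prime_ge_mul_ln m : (0 < m)%nat ->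
  INR m * ln (INR m) <= 4 * ln 8 * INR (nth_prime m).
Proof.
move=> m_gt0; set X := nth_prime m; set y := m./2.
have m_half := odd_double_half m; rewrite -/y in m_half.
have pow_le : (y.+1 ^ (m - y) <= 8 ^ X)%nat.
  have le_yX : (y <= X)%nat by have := nth_prime_gt m; rewrite -/X; lia.
  apply: leq_trans (exp_primepi_sub_le le_yX); rewrite leq_pexp2l //.
  by rewrite primepi_nth_prime // leq_sub2l // primepi_le.
have y1_gt0 : 0 < INR y.+1 by apply: lt_0_INR; apply/ltP.
have := leq_INR pow_le; rewrite !INR_expn => /(ln_le _ _ (pow_lt _ _ y1_gt0)).
have INR8 : INR 8 = 8 by rewrite INR_IZR_INZ.
rewrite !ln_pow ?INR8 //; last lra.
rewrite minus_INR ?S_INR => [ln_pow_le|]; last by apply/leP; lia.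
have [y2_le y2_ge] : INR (y + y) <= INR m <= INR (y + y).+1.
  by split; apply: leq_INR; lia.
rewrite S_INR plus_INR in y2_le y2_ge.
have y_ge0 := pos_INR y.
have m_ge1 : 1 <= INR m by apply: (leq_INR m_gt0).
have ln_m_le : ln (INR m) <= 2 * ln (INR y + 1).
  have sq_ge : INR m <= (INR y + 1) * (INR y + 1) by nra.
  by have := ln_le _ _ (_ : 0 < INR m) sq_ge; rewrite ln_mult; lra.
have ln_m_ge0 := ln_ge0 m_ge1.
have := @Rmult_le_compat (INR m / 2) (INR m - INR y) (ln (INR m) / 2) (ln (INR y + 1)).
lra.
Qed.

Lemma le_mul_ln_of_self_bound x y : 36 <= y -> 0 < x -> x <= 6 * y * ln x ->
  x <= 18 * y * ln y.
Proof.
move=> y_ge36 x_gt0 x_le.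
have lnx_gt0 : 0 < ln x by nra.
have ln_x_le : ln x <= ln 6 + ln y + ln (ln x).
  by have := ln_le _ _ x_gt0 x_le; rewrite !ln_mult //; lra.
have := ln_le_half lnx_gt0.
have : ln 6 + ln 6 <= ln y by rewrite -ln_mult; [apply: ln_le|..]; lra.
move=> ln36_le lnlnx_le; have ln_x_le3 : ln x <= 3 * ln y by lra.
have := Rmult_le_compat_l (6 * y) _ _ _ ln_x_le3; lra.
Qed.

(* With X = p_m and k = (X-1)/2 we have pi(2k) < m, so 2^k <= (2k)^(m-1), whence
   X <= 6 m ln X. *)
Lemma nth_prime_le_mul_ln m : (36 <= m)%nat ->
  INR (nth_prime m) <= 18 * INR m * ln (INR m).
Proof.
move=> m_ge36; set X := nth_prime m; set k := X.-1./2.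
have X_gt : (m < X)%nat := nth_prime_gt m.
have X_half := odd_double_half X.-1; rewrite -/k in X_half.
have k_gt0 : (0 < k)%nat by lia.
have pow_le : (2 ^ k <= k.*2 ^ m.-1)%nat.
  apply: leq_trans (exp2_le_exp_primepi k_gt0) _; rewrite leq_pexp2l ?double_gt0 //.
  rewrite -(primepi_nth_prime (_ : 0 < m)%nat); last by lia.
  by rewrite -primepi_pred ?prime_nth_prime // leq_primepi //; lia.
have INR2 : INR 2 = 2 by rewrite INR_IZR_INZ.
have [kk_lt X_le] : INR (k + k) < INR X <= INR (k + k + 2).
  by split; [apply/lt_INR/ltP | apply: leq_INR]; lia.
rewrite !plus_INR INR2 in kk_lt X_le.
have m_ge36R : 36 <= INR m by rewrite -(INR_IZR_INZ 36); apply: leq_INR.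
have k_ge1 : 1 <= INR k by apply: (leq_INR k_gt0).
have k_ln2_le : INR k * ln 2 <= (INR m - 1) * ln (INR k + INR k).
  have pow_le_R := leq_INR pow_le.
  rewrite !INR_expn INR2 -addnn plus_INR in pow_le_R.
  have two_gt0 : 0 < 2 by lra.
  have := ln_le _ _ (pow_lt 2 k two_gt0) pow_le_R; rewrite !ln_pow; try lra.
  by rewrite -subn1 minus_INR ?INR_1 //; apply/leP; lia.
have ln2k_le : ln (INR k + INR k) <= ln (INR X) by apply: ln_le; lra.
have ln2k_ge0 : 0 <= ln (INR k + INR k) by apply: ln_ge0; lra.
have lnX_gt : / 2 < ln (INR X).
  by apply: Rlt_le_trans ln_lt_2 (ln_le _ _ _ _); lra.
have k_le : INR k <= 2 * INR m * ln (INR X).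
  have := Rmult_le_compat (INR m - 1) (INR m) _ _ ltac:(lra) ln2k_ge0 ltac:(lra) ln2k_le.
  have := Rmult_le_compat_l (INR k) _ _ ltac:(lra) (Rlt_le _ _ ln_lt_2); lra.
have mlnX_ge : 18 <= INR m * ln (INR X).
  have := Rmult_le_compat 36 (INR m) (/ 2) (ln (INR X)); lra.
apply: le_mul_ln_of_self_bound; lra.
Qed.

Lemma ln_nth_prime_sub_le m : (36 <= m)%nat ->
  Rabs (ln (INR (nth_prime m)) - ln (INR m) - ln (ln (INR m))) <= ln 18.
Proof.
move=> m_ge36; have m_ge36R : 36 <= INR m by rewrite -(INR_IZR_INZ 36); apply: leq_INR.
have X_gt0 : 0 < INR (nth_prime m) by apply/lt_0_INR/ltP; have := nth_prime_gt m; lia.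
have lnm_gt0 : 0 < ln (INR m) by apply: ln_gt0; lra.
have ln8_gt0 : 0 < ln 8 by apply: ln_gt0; lra.
have ln8_le : ln 8 <= 4 by have := @ln_le_half 8 ltac:(lra); lra.
have upper := ln_le _ _ X_gt0 (nth_prime_le_mul_ln m_ge36).
rewrite (ln_mult (18 * INR m)) ?(ln_mult 18) in upper; try lra.
have m_gt0 : (0 < m)%nat by lia.
have mlnm_gt0 : 0 < INR m * ln (INR m) by nra.
have lower := ln_le _ _ mlnm_gt0 (nth_prime_ge_mul_ln m_gt0).
rewrite (ln_mult (INR m)) ?(ln_mult (4 * ln 8)) in lower; try lra.
have := @ln_le (4 * ln 8) 18 ltac:(lra) ltac:(lra).
by move=> ln_c_le; apply: Rabs_le; lra.
Qed.

(** * Sequences with L_(j+1) = L_j + ln L_j + O(1) *)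

Lemma mul_ln_succ_le x : 1 <= x -> (x + 1) * ln (x + 1) <= x * ln x + ln x + 2.
Proof.
move=> x_ge1; have inv_gt0 : 0 < / x by apply: Rinv_0_lt_compat; lra.
have inv_le1 : / x <= 1 by rewrite -Rinv_1; apply: Rinv_le_contravar; lra.
have ln_succ : ln (x + 1) <= ln x + / x.
  have -> : x + 1 = x * (1 + / x) by field; lra.
  rewrite ln_mult; try lra; have := @ln_le_sub1 (1 + / x) ltac:(lra); lra.
have := Rmult_le_compat_l (x + 1) _ _ ltac:(lra) ln_succ.
have : (x + 1) * / x = 1 + / x by field; lra.
lra.
Qed.

Definition upper_env B x := x * ln x + x * ln (ln x) + B * x.

Lemma upper_env_step B K x : 0 <= K -> 2 + 2 * K <= B -> 3 <= x ->
  upper_env B x + ln (upper_env B x) + K <= upper_env B (x + 1).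
Proof.
move=> K_ge0 B_ge x_ge3; rewrite /upper_env.
have l_ge1 := ln_ge1 x_ge3.
have ll_ge0 := ln_ge0 l_ge1.
have ll_le : ln (ln x) <= ln x by have := @ln_le_sub1 (ln x) ltac:(lra); lra.
have lx_le : ln x <= ln (x + 1) by apply: ln_le; lra.
have llx_le : ln (ln x) <= ln (ln (x + 1)) by apply: ln_le; lra.
set g := x * ln x + x * ln (ln x) + B * x.
have xl_ge : x <= x * ln x by nra.
have g_le : g <= (2 + B) * (x * ln x) by rewrite /g; nra.
have ln_g_le : ln g <= ln x + ln (ln x) + (2 + B) / 2.
  have g_gt0 : 0 < g by rewrite /g; nra.
  apply: Rle_trans (ln_le _ _ g_gt0 g_le) _.
  rewrite !ln_mult; try nra; have := @ln_le_half (2 + B) ltac:(lra); lra.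
have := Rmult_le_compat_l (x + 1) _ _ ltac:(lra) lx_le.
have := Rmult_le_compat_l (x + 1) _ _ ltac:(lra) llx_le.
rewrite /g in ln_g_le *; nra.
Qed.

Lemma le_from_increments (u v : nat -> R) N :
  u N <= v N -> (forall j, (N <= j)%coq_nat -> u j.+1 - u j <= v j.+1 - v j) ->
  forall j, (N <= j)%coq_nat -> u j <= v j.
Proof. by move=> le_N le_incr j; elim=> // {}j le_Nj IH; have := le_incr j le_Nj; lra. Qed.

Lemma is_lim_seq_ln_INR : is_lim_seq (fun j => ln (INR j)) p_infty.
Proof.
apply: (is_lim_comp_seq _ _ _ _ is_lim_ln_p); last exact: is_lim_seq_INR.
by exists 0%nat.
Qed.

Lemma is_lim_seq_jlnj_squeeze (u : nat -> R) A B :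
  eventually (fun j => INR j * ln (INR j) - A * INR j <= u j) ->
  eventually (fun j => u j <= upper_env B (INR j)) ->
  is_lim_seq (fun j => u j / (INR j * ln (INR j))) 1.
Proof.
move=> lower upper.
have inv_ln : is_lim_seq (fun j => / ln (INR j)) 0.
  exact: (is_lim_seq_inv _ _ is_lim_seq_ln_INR).
have lnln_ln : is_lim_seq (fun j => ln (ln (INR j)) / ln (INR j)) 0.
  apply: (is_lim_comp_seq (fun y => ln y / y) _ _ _ is_lim_div_ln_p) => //.
    by exists 0%nat.
  exact: is_lim_seq_ln_INR.
apply: (is_lim_seq_le_le_loc (fun j => 1 - A * / ln (INR j)) _
          (fun j => 1 + ln (ln (INR j)) / ln (INR j) + B * / ln (INR j))).
- have ge2 : eventually (fun j => (2 <= j)%coq_nat) by exists 2%nat.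
  apply: filter_imp (filter_and _ _ ge2 (filter_and _ _ lower upper)).
  move=> j [j_ge2 [low up]].
  have j_ge2R : 2 <= INR j by apply: (le_INR 2).
  have lnj_gt0 : 0 < ln (INR j) by apply: ln_gt0; lra.
  have P_gt0 : 0 < / (INR j * ln (INR j)) by apply/Rinv_0_lt_compat; nra.
  split.
    have -> : 1 - A * / ln (INR j) = (INR j * ln (INR j) - A * INR j) * / (INR j * ln (INR j)).
      by field; lra.
    by apply: Rmult_le_compat_r; lra.
  have -> : 1 + ln (ln (INR j)) / ln (INR j) + B * / ln (INR j) =
            upper_env B (INR j) * / (INR j * ln (INR j)).
    by rewrite /upper_env; field; lra.
  by apply: Rmult_le_compat_r; lra.
- have A_inv_ln := is_lim_seq_mult' _ _ _ _ (is_lim_seq_const A) inv_ln.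
  have := is_lim_seq_minus' _ _ _ _ (is_lim_seq_const 1) A_inv_ln.
  by rewrite Rmult_0_r Rminus_0_r.
- have B_inv_ln := is_lim_seq_mult' _ _ _ _ (is_lim_seq_const B) inv_ln.
  have := is_lim_seq_plus' _ _ _ _ (is_lim_seq_const 1) lnln_ln.
  by move/is_lim_seq_plus'/(_ B_inv_ln); rewrite Rmult_0_r !Rplus_0_r.
Qed.

Section IteratedLogGrowth.

Variables (L : nat -> R) (K : R).
Hypothesis L_to_infty : is_lim_seq L p_infty.
Hypothesis L_step : eventually (fun j => Rabs (L j.+1 - L j - ln (L j)) <= K).

Lemma step_bound_ge0 : 0 <= K.
Proof. by have [N stepN] := L_step; apply: Rle_trans (Rabs_pos _) (stepN N (le_n N)). Qed.

Lemma eventually_L_step :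
  eventually (fun j => L j + ln (L j) - K <= L j.+1 <= L j + ln (L j) + K).
Proof. by apply: filter_imp L_step => j /Rabs_le_between; lra. Qed.

Lemma eventually_L_gt c : eventually (fun j => c < L j).
Proof. by move/is_lim_seq_spec: L_to_infty. Qed.

Lemma eventually_half_le_L : eventually (fun j => INR j / 2 <= L j).
Proof.
have [N HN] := filter_and _ _ (eventually_L_gt (exp (K + 1))) eventually_L_step.
have L_incr j : (N <= j)%coq_nat -> (INR j.+1 - INR N) - (INR j - INR N) <= L j.+1 - L j.
  move=> /HN[L_gt step]; rewrite S_INR.
  have : K + 1 < ln (L j).
    by rewrite -[K + 1]ln_exp; apply: ln_increasing => //; exact: exp_pos.
  lra.
have L_N : INR N - INR N <= L N.
  by have := exp_pos (K + 1); have := proj1 (HN N (le_n N)); lra.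
have lin := le_from_increments L_N L_incr.
exists (2 * N)%nat => j j_ge; have := lin j ltac:(lia).
by have := le_INR _ _ j_ge; rewrite mult_INR /=; lra.
Qed.

Lemma eventually_lower_env :
  exists A, eventually (fun j => INR j * ln (INR j) - A * INR j <= L j).
Proof.
have [N HN] := filter_and _ _ eventually_half_le_L eventually_L_step.
have K_ge0 := step_bound_ge0.
have N1_ge1 : 1 <= INR N.+1 by rewrite S_INR; have := pos_INR N; lra.
exists (K + 2 + ln 2 + ln (INR N.+1)), N.+1.
apply: le_from_increments => [|j le_N1j].
  have [half_le _] := HN N.+1 ltac:(lia).
  have := ln_ge0 N1_ge1; have := @ln_ge0 2 ltac:(lra); nra.
have [half_le step] := HN j ltac:(lia).
have j_ge1 : 1 <= INR j by apply: (le_INR 1); lia.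
have ln_half_le : ln (INR j / 2) <= ln (L j) by apply: ln_le; lra.
rewrite ln_div in ln_half_le; try lra.
have := ln_ge0 N1_ge1; have := mul_ln_succ_le j_ge1; rewrite [INR j.+1]S_INR; lra.
Qed.

Lemma eventually_upper_env : exists B, eventually (fun j => L j <= upper_env B (INR j)).
Proof.
have [N HN] := filter_and _ _ (eventually_L_gt 0) eventually_L_step.
have K_ge0 := step_bound_ge0.
set N3 := (N + 3)%nat; exists (2 + 2 * K + L N3), N3.
have [LN3_gt0 _] := HN N3 ltac:(lia).
have ge3 j : (N3 <= j)%coq_nat -> 3 <= INR j.
  by move=> ?; rewrite -(INR_IZR_INZ 3); apply: le_INR; lia.
move=> j; elim=> [|{}j le_N3j IH].
  have x_ge3 := ge3 N3 (le_n N3); have l_ge1 := ln_ge1 x_ge3.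
  by have := ln_ge0 l_ge1; rewrite /upper_env; nra.
have [Lj_gt0 step] := HN j ltac:(lia).
have j_ge3 := ge3 j le_N3j.
have := ln_le _ _ Lj_gt0 IH.
have B_ge : 2 + 2 * K <= 2 + 2 * K + L N3 by lra.
have := upper_env_step K_ge0 B_ge j_ge3.
rewrite S_INR; lra.
Qed.

Lemma is_lim_seq_jlnj_ratio : is_lim_seq (fun j => L j / (INR j * ln (INR j))) 1.
Proof.
have [A lower] := eventually_lower_env; have [B upper] := eventually_upper_env.
exact: is_lim_seq_jlnj_squeeze lower upper.
Qed.

End IteratedLogGrowth.

Unset Implicit Arguments.

Theorem corollary7 (n : nat) : is_true (leq 1 n) ->
  Un_cv (fun j : nat => ln (INR (iter_prime j n)) / (INR j * ln (INR j))) 1.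
Proof.
(* [1 <= n] is not needed: from the junk value [nth_prime 0 = 2] on, the
   iterates grow just the same. *)
move=> _; apply/is_lim_seq_Reals.
have iter_ge j : INR j <= INR (iter_prime j n).
  by apply: leq_INR; apply: leq_trans (leq_addr n j) (iter_prime_ge j n).
apply: (is_lim_seq_jlnj_ratio (K := ln 18)).
  apply: (is_lim_seq_le_p_loc _ _ _ is_lim_seq_ln_INR); exists 1%nat => j j_ge1.
  by apply: ln_le (iter_ge j); apply: lt_0_INR.
exists 36%nat => j /leP j_ge36; apply: ln_nth_prime_sub_le.
exact: leq_trans j_ge36 (leq_trans (leq_addr n j) (iter_prime_ge j n)).
Qed.
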